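(* The map $f\colon D_{uz}\to\mathbb{R}^2$ is injective; hence $f$ is a bijection from $D_{uz}$ onto $D_{ab}=f(D_{uz})$.
   Context: Let $D_{uz}=\{(u,z)\in\mathbb{R}^2: 0<u<1,\ 0<z<1\}$. Define $f\colon D_{uz}\to\mathbb{R}^2$ by $f(u,z)=(a(u,z),b(u,z))$, where $a(u,z)$ and $b(u,z)$ are the positive real numbers determined by $$a^2=\frac{u^2+z^2}{u^2z^2+1},\qquad b^2=\frac{(1+u^2)(1+z^2)-2z(1-u^2)}{(1+u^2)(1+z^2)+2z(1-u^2)}$$ (both right-hand sides are positive on $D_{uz}$). Let $D_{ab}=f(D_{uz})$. *)

From Stdlib Require Import Reals.
Open Scope R_scope.

Definition D_uz (p : R * R) : Prop :=
  0 < fst p < 1 /\ 0 < snd p < 1.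

Definition a_sq (u z : R) : R := (u^2 + z^2) / (u^2 * z^2 + 1).
Definition b_sq (u z : R) : R :=
  ((1 + u^2) * (1 + z^2) - 2 * z * (1 - u^2)) /
  ((1 + u^2) * (1 + z^2) + 2 * z * (1 - u^2)).

Definition f_ab (p : R * R) : R * R :=
  (sqrt (a_sq (fst p) (snd p)), sqrt (b_sq (fst p) (snd p))).

Definition D_ab (q : R * R) : Prop := exists p, D_uz p /\ f_ab p = q.

(* Put [t = 2 arctan] and let [C x = (1-x)/(1+x)] be the Cayley transform.
   Then [a^2 = C (cos t(u) cos t(z))] and [b^2 = C (cos t(u) sin t(z))]. Since
   [C] is injective, [(a, b)] determines the vector
   [cos t(u) (cos t(z), sin t(z))], hence its length [cos t(u)] and its
   direction; and [cos t] is injective on nonnegative arguments. *)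
From Stdlib Require Import Reals Lra Psatz.
Open Scope R_scope.

Definition cayley (x : R) : R := (1 - x) / (1 + x).

Definition cos2atan (u : R) : R := (1 - u^2) / (1 + u^2).
Definition sin2atan (u : R) : R := 2 * u / (1 + u^2).

Lemma cayley_ge0 x : -1 < x <= 1 -> 0 <= cayley x.
Proof. intros Hx; unfold cayley; apply Rle_mult_inv_pos; lra. Qed.

Lemma cayley_inj x y : 1 + x <> 0 -> 1 + y <> 0 -> cayley x = cayley y -> x = y.
Proof.
  unfold cayley; intros Hx Hy Hxy.
  assert (Hcross : (1 - x) * (1 + y) = (1 - y) * (1 + x)).
  { apply (f_equal (fun t => t * (1 + x) * (1 + y))) in Hxy.
    field_simplify in Hxy; lra. }
  lra.
Qed.

Lemma sqrt_cayley_inj x y : -1 < x <= 1 -> -1 < y <= 1 ->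
  sqrt (cayley x) = sqrt (cayley y) -> x = y.
Proof.
  intros Hx Hy Hxy.
  apply sqrt_inj in Hxy; try apply cayley_ge0; try assumption.
  apply cayley_inj; lra.
Qed.

Lemma cos2atan_sq_add_sin2atan_sq u : cos2atan u ^ 2 + sin2atan u ^ 2 = 1.
Proof. unfold cos2atan, sin2atan; field; nra. Qed.

Lemma cos2atan_bounds u : 0 < u < 1 -> 0 < cos2atan u < 1.
Proof.
  intros Hu; unfold cos2atan; split.
  - apply Rdiv_lt_0_compat; nra.
  - apply Rmult_lt_reg_r with (1 + u^2); [nra |]; field_simplify; nra.
Qed.

Lemma cos2atan_inj u v : 0 <= u -> 0 <= v -> cos2atan u = cos2atan v -> u = v.
Proof.
  unfold cos2atan; intros Hu Hv Huv.
  assert (Hcross : (1 - u^2) * (1 + v^2) = (1 - v^2) * (1 + u^2)).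
  { apply (f_equal (fun t => t * (1 + u^2) * (1 + v^2))) in Huv.
    field_simplify in Huv; nra. }
  nra.
Qed.

Lemma a_sq_cayley u z : a_sq u z = cayley (cos2atan u * cos2atan z).
Proof. unfold a_sq, cayley, cos2atan; field; split; [|split]; nra. Qed.

Lemma b_sq_cayley u z : z <> -1 -> b_sq u z = cayley (cos2atan u * sin2atan z).
Proof.
  intros Hz; unfold b_sq, cayley, cos2atan, sin2atan.
  (* The denominator of [b_sq] is [(1+z)^2 + u^2 (1-z)^2]. *)
  assert (0 < (1 + z)^2 + u^2 * (1 - z)^2).
  { assert (0 < (1 + z)²) by (apply Rsqr_pos_lt; lra).
    pose proof (pow2_ge_0 (u * (1 - z))). unfold Rsqr in *; nra. }
  field; split; [|split]; nra.
Qed.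

Lemma mul_unit_circle_bounds c x y : 0 < c < 1 -> x^2 + y^2 = 1 -> -1 < c * x <= 1.
Proof. intros Hc Hxy; split; nra. Qed.

Lemma polar_inj c1 x1 y1 c2 x2 y2 : 0 < c1 -> 0 < c2 ->
  x1^2 + y1^2 = 1 -> x2^2 + y2^2 = 1 ->
  c1 * x1 = c2 * x2 -> c1 * y1 = c2 * y2 -> c1 = c2 /\ x1 = x2.
Proof.
  intros Hc1 Hc2 H1 H2 Hx Hy.
  assert (Hsq : c1^2 = c2^2).
  { replace (c1^2) with (c1^2 * (x1^2 + y1^2)) by (rewrite H1; ring).
    replace (c2^2) with (c2^2 * (x2^2 + y2^2)) by (rewrite H2; ring).
    replace (c1^2 * (x1^2 + y1^2)) with ((c1 * x1)^2 + (c1 * y1)^2) by ring.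
    rewrite Hx, Hy; ring. }
  assert (Hc : c1 = c2) by nra.
  split; [exact Hc |].
  subst c2; apply Rmult_eq_reg_l with c1; lra.
Qed.

Lemma f_ab_inj p1 p2 : D_uz p1 -> D_uz p2 -> f_ab p1 = f_ab p2 -> p1 = p2.
Proof.
  destruct p1 as [u1 z1], p2 as [u2 z2]; unfold D_uz, f_ab; simpl.
  intros [Hu1 Hz1] [Hu2 Hz2] Hf; injection Hf as Ha Hb.
  rewrite !a_sq_cayley in Ha; rewrite !b_sq_cayley in Hb by lra.
  pose proof (cos2atan_bounds _ Hu1); pose proof (cos2atan_bounds _ Hu2).
  pose proof (cos2atan_sq_add_sin2atan_sq z1) as Hcirc1.
  pose proof (cos2atan_sq_add_sin2atan_sq z2) as Hcirc2.
  assert (Hcirc1' : sin2atan z1 ^ 2 + cos2atan z1 ^ 2 = 1) by lra.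
  assert (Hcirc2' : sin2atan z2 ^ 2 + cos2atan z2 ^ 2 = 1) by lra.
  apply sqrt_cayley_inj in Ha;
    try (eapply mul_unit_circle_bounds; [| eassumption]; lra).
  apply sqrt_cayley_inj in Hb;
    try (eapply mul_unit_circle_bounds; [| eassumption]; lra).
  destruct (polar_inj (cos2atan u1) _ _ (cos2atan u2) _ _
              ltac:(lra) ltac:(lra) Hcirc1 Hcirc2 Ha Hb) as [Hu Hz].
  f_equal; apply cos2atan_inj; lra.
Qed.

Theorem mainTheorem3 :
  (forall p1 p2 : R * R, D_uz p1 -> D_uz p2 -> f_ab p1 = f_ab p2 -> p1 = p2) /\
  (forall q : R * R, D_ab q ->
     exists p : R * R, D_uz p /\ f_ab p = q /\
       (forall p' : R * R, D_uz p' -> f_ab p' = q -> p' = p)).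
Proof.
  split; [exact f_ab_inj |].
  intros q [p [Hp Hpq]]; exists p; split; [exact Hp | split; [exact Hpq |]].
  intros p' Hp' Hp'q; apply f_ab_inj; congruence.
Qed.
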